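(* Let $(G,c,r)$ be an instance of the metric Many-Visits TSP and let $\alpha\geq1$. Let $T_1$ be a Hamiltonian cycle in $G$ (a single-visit TSP tour) with $c(T_1)\leq\alpha\cdot c(\mathrm{OPT}_1)$, where $\mathrm{OPT}_1$ is an optimal single-visit tour, and let $P\in\mathbb{Z}_{\geq0}^E$ be an optimal solution of the transportation problem with prescriptions $r-1$, i.e. a minimum-cost $P$ with $d_P(v)=2(r(v)-1)$ for all $v\in V$. Then the multigraph $T=T_1+P$ is a feasible solution of the Many-Visits TSP instance $(G,c,r)$, and $c(T)\leq(\alpha+1)\cdot c(\mathrm{OPT}_r)$, where $\mathrm{OPT}_r$ is an optimal Many-Visits TSP solution for $(G,c,r)$.
   Context: $G=(V,E)$ is the complete undirected graph on $n$ vertices with a self-loop at each vertex; $d_x(v)$ is the sum of $x$-values of edges incident to $v$, the self-loop counted twice. Costs $c:E\to\mathbb{R}_{\geq0}$ satisfy the triangle inequality, including $c(vv)\leq 2c(uv)$ for all $u,v$. A feasible Many-Visits TSP solution for requests $r:V\to\mathbb{Z}_{\geq1}$ is $z\in\mathbb{Z}_{\geq0}^E$ with $d_z(v)=2r(v)$ for all $v$ and $(V,\mathrm{supp}(z))$ connected; its cost is $\sum_e c(e)z(e)$. The transportation problem with prescriptions $q:V\to\mathbb{Z}_{\geq0}$ asks for a minimum-cost $z\in\mathbb{Z}_{\geq0}^E$ with $d_z(v)=2q(v)$ for all $v$ (no connectivity). For multigraphs $H_1,H_2$ on $V$, $H_1+H_2$ is the union of their edge multisets. *)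

From HB Require Import structures.
From mathcomp Require Import all_boot all_order all_algebra.
Set Implicit Arguments. Unset Strict Implicit. Unset Printing Implicit Defensive.
Import Order.TTheory GRing.Theory Num.Theory.

(* Vertices: 'I_n.  Edges of the complete graph with a self-loop at every
   vertex: unordered pairs {u,v} (u = v allowed), represented as ordered
   pairs (u,v) with u <= v. *)
Definition edge (n : nat) := {e : 'I_n * 'I_n | e.1 <= e.2}.

Lemma swap_le n (u v : 'I_n) : ~~ (u <= v) -> (v <= u)%N.
Proof. by rewrite -ltnNge; apply: ltnW. Qed.

Definition mk_edge n (u v : 'I_n) : edge n :=
  match boolP (u <= v) with
  | AltTrue h => exist _ (u, v) h
  | AltFalse h => exist (fun e : 'I_n * 'I_n => is_true (e.1 <= e.2)) (v, u) (swap_le h)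
  end.

(* d_x(v): self-loop counted twice *)
Definition deg n (x : edge n -> nat) (v : 'I_n) : nat :=
  \sum_(e : edge n) x e * ((((val e).1 == v) : nat) + (((val e).2 == v) : nat)).

Definition cost (R : numDomainType) n (c : edge n -> R) (x : edge n -> nat) : R :=
  (\sum_(e : edge n) (x e)%:R * c e)%R.

Definition msum n (x y : edge n -> nat) : edge n -> nat := fun e => x e + y e.

Definition supp_adj n (x : edge n -> nat) : rel 'I_n :=
  fun u v => 0 < x (mk_edge u v).
Definition connected_supp n (x : edge n -> nat) : Prop :=
  forall u v : 'I_n, connect (supp_adj x) u v.

Definition mvtsp_feasible n (r : 'I_n -> nat) (z : edge n -> nat) : Prop :=
  (forall v, deg z v = 2 * r v) /\ connected_supp z.

Definition transp_feasible n (q : 'I_n -> nat) (z : edge n -> nat) : Prop :=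
  forall v, deg z v = 2 * q v.

(* Hamiltonian cycle (single-visit tour): the edge multiset of the closed
   walk visiting the vertices in the cyclic order s, where s enumerates
   every vertex exactly once. *)
Definition tour_edges n (s : seq 'I_n) : seq (edge n) :=
  [seq mk_edge p.1 p.2 | p <- zip s (rot 1 s)].
Definition ham_cycle n (z : edge n -> nat) : Prop :=
  exists s : seq 'I_n, perm_eq s (enum 'I_n) /\
    forall e, z e = count_mem e (tour_edges s).

Definition metric_cost (R : numDomainType) n (c : edge n -> R) : Prop :=
  (forall e, 0 <= c e)%R /\
  (forall u v w : 'I_n, c (mk_edge u v) <= c (mk_edge u w) + c (mk_edge w v))%R.

From HB Require Import structures.
From mathcomp Require Import all_boot all_order all_algebra.
From mathcomp Require Import zify lra.
Import Order.TTheory GRing.Theory Num.Theory.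
Set Implicit Arguments. Unset Strict Implicit. Unset Printing Implicit Defensive.

(* Feasibility: the tour T1 is connected and has degree 2 everywhere, and P
   supplies the remaining degree 2 (r v - 1).  For the bound, let z be any
   feasible Many-Visits solution.  By the triangle inequality, two edges uv, vw
   at a vertex can be replaced by the shortcut uw (and a loop can be dropped)
   without increasing the cost; doing this once at every vertex turns z into a
   transportation solution for r - 1, so c(P) <= c(z).  On the other hand z is
   connected with even degrees: it splits into closed walks which can be spliced
   along common vertices into one closed walk through every vertex, and
   shortcutting its repeated vertices gives a Hamiltonian cycle H with
   c(H) <= c(z), so c(T1) <= alpha c(z). *)

Lemma sum_count_mem (I : finType) (V : nmodType) (s : seq I) (F : I -> V) :
  (\sum_(i : I) F i *+ count_mem i s = \sum_(i <- s) F i)%R.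
Proof.
elim: s => [|j s IH]; first by rewrite big_nil big1 // => i _; rewrite mulr0n.
rewrite big_cons -IH /=.
under eq_bigr do rewrite mulrnDr.
rewrite big_split /= (bigD1 j) //= eqxx big1 ?addr0 // => i.
by rewrite eq_sym => /negbTE ->.
Qed.

Section Multigraphs.
Variable n : nat.
Implicit Types (u v w x y : 'I_n) (e f : edge n) (z : edge n -> nat) (l : seq (edge n)).

Lemma mk_edge_val u v : val (mk_edge u v) = if u <= v then (u, v) else (v, u).
Proof. by rewrite /mk_edge; destruct (boolP (u <= v)). Qed.

Lemma mk_edgeC u v : mk_edge u v = mk_edge v u.
Proof.
apply: val_inj; rewrite !mk_edge_val.
case: (ltngtP u v) => [||/val_inj->] //; by [rewrite leqNgt => ->|move=> /ltnW->].
Qed.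

Lemma mk_edge_ends e : mk_edge (val e).1 (val e).2 = e.
Proof. by apply: val_inj; rewrite mk_edge_val (valP e); case: (val e). Qed.

Definition ends e v : nat := ((val e).1 == v) + ((val e).2 == v).

Lemma ends_mk_edge u v w : ends (mk_edge u v) w = (u == w) + (v == w).
Proof. by rewrite /ends mk_edge_val; case: ifP => _ //=; rewrite addnC. Qed.

Lemma ends_gt0 e v : 0 < ends e v -> exists u, e = mk_edge v u.
Proof.
rewrite -(mk_edge_ends e) ends_mk_edge; case: (val e) => a b /=.
case: (eqVneq a v) => [->|_]; first by exists b.
by case: (eqVneq b v) => [->|//]; exists a; rewrite mk_edgeC.
Qed.

Definition mgraph l : edge n -> nat := fun e => count_mem e l.

Definition msize z : nat := \sum_e z e.

Definition sub1 z e : edge n -> nat := fun f => z f - (e == f).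

Lemma eq_deg z1 z2 : z1 =1 z2 -> deg z1 =1 deg z2.
Proof. by move=> eq_z v; apply: eq_bigr => e _; rewrite eq_z. Qed.

Lemma deg_msum z1 z2 v : deg (msum z1 z2) v = deg z1 v + deg z2 v.
Proof. by rewrite /deg -big_split; apply: eq_bigr => e _; rewrite /msum mulnDl. Qed.

Lemma deg_mgraph l v : deg (mgraph l) v = \sum_(e <- l) ends e v.
Proof.
rewrite -sum_count_mem; apply: eq_bigr => e _.
by rewrite -mulr_natr natn mulnC.
Qed.

Lemma mgraph_gt0 l e : (0 < mgraph l e) = (e \in l).
Proof. by rewrite /mgraph -has_count has_pred1. Qed.

Lemma supp_adj_sym z : symmetric (supp_adj z).
Proof. by move=> u v; rewrite /supp_adj mk_edgeC. Qed.

Lemma msum_sub1 z e : 0 < z e -> msum (sub1 z e) (mgraph [:: e]) =1 z.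
Proof. by move=> ze f; rewrite /msum /sub1 /mgraph /= addn0; case: eqP => [<-|]; lia. Qed.

Lemma deg_sub1 z e v : 0 < z e -> deg (sub1 z e) v + ends e v = deg z v.
Proof. by move=> ze; rewrite -(eq_deg (msum_sub1 ze)) deg_msum deg_mgraph big_seq1. Qed.

Lemma msize_sub1 z e : 0 < z e -> (msize (sub1 z e)).+1 = msize z.
Proof.
move=> ze; rewrite /msize -(eq_bigr _ (fun f _ => msum_sub1 ze f)) big_split /= -addn1.
by congr (_ + _); rewrite (bigD1 e) //= eqxx big1 // => f; rewrite eq_sym => /negbTE->.
Qed.

Lemma deg_gt0_edge z v : 0 < deg z v -> exists u, 0 < z (mk_edge v u).
Proof.
rewrite lt0n sum_nat_eq0 => /forallPn [e /=]; rewrite muln_eq0 negb_or -!lt0n.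
by case/andP=> ze /ends_gt0 [u def_e]; exists u; rewrite -def_e.
Qed.

End Multigraphs.

Section Costs.
Variables (R : numDomainType) (n : nat) (c : edge n -> R).
Implicit Types (e : edge n) (z : edge n -> nat) (l : seq (edge n)).

Lemma eq_cost z1 z2 : z1 =1 z2 -> cost c z1 = cost c z2.
Proof. by move=> eq_z; apply: eq_bigr => e _; rewrite eq_z. Qed.

Lemma cost_msum z1 z2 : cost c (msum z1 z2) = (cost c z1 + cost c z2)%R.
Proof. by rewrite /cost -big_split; apply: eq_bigr => e _; rewrite natrD mulrDl. Qed.

Lemma cost_mgraph l : cost c (mgraph l) = (\sum_(e <- l) c e)%R.
Proof. by rewrite -sum_count_mem; apply: eq_bigr => e _; rewrite mulr_natl. Qed.

Lemma cost_sub1 z e : 0 < z e -> (cost c (sub1 z e) + c e)%R = cost c z.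
Proof. by move=> ze; rewrite -(eq_cost (msum_sub1 ze)) cost_msum cost_mgraph big_seq1. Qed.

End Costs.

Lemma zip_rot (S T : Type) k (s : seq S) (t : seq T) :
  size s = size t -> zip (rot k s) (rot k t) = rot k (zip s t).
Proof.
have zip_take i (s' : seq S) (t' : seq T) : zip (take i s') (take i t') = take i (zip s' t').
  by elim: s' t' i => [|x s' IH] [|y t'] [|i] //=; rewrite IH.
have zip_drop i (s' : seq S) (t' : seq T) : zip (drop i s') (drop i t') = drop i (zip s' t').
  by elim: s' t' i => [|x s' IH] [|y t'] [|i] //=; case: drop.
by move=> eq_size; rewrite /rot zip_cat ?size_drop ?eq_size // zip_take zip_drop.
Qed.

Section Tours.
Variable n : nat.
Implicit Types (u v x : 'I_n) (p s t : seq 'I_n) (z : edge n -> nat).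

Definition walk_edges x p : seq (edge n) :=
  [seq mk_edge q.1 q.2 | q <- zip (belast x p) p].

Lemma walk_edges_cons x y p : walk_edges x (y :: p) = mk_edge x y :: walk_edges y p.
Proof. by []. Qed.

Lemma tour_edges_cons x p :
  tour_edges (x :: p) = rcons (walk_edges x p) (mk_edge (last x p) x).
Proof.
by rewrite /tour_edges rot1_cons {1}(lastI x p) zip_rcons ?size_belast // map_rcons.
Qed.

Lemma perm_tour_edges_rot k s : perm_eq (tour_edges (rot k s)) (tour_edges s).
Proof. by rewrite /tour_edges rot_rot zip_rot ?size_rot // map_rot perm_rot. Qed.

Lemma tour_edges_cat x s t :
  tour_edges (x :: s ++ x :: t) = tour_edges (x :: s) ++ tour_edges (x :: t).
Proof.
rewrite /tour_edges; have -> : rot 1 (x :: s ++ x :: t) = rcons s x ++ rcons t x.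
  by rewrite rot1_cons rcons_cat cat_rcons.
by rewrite -cat_cons zip_cat ?size_rcons // map_cat !rot1_cons.
Qed.

Lemma mem_tour_edges u v s : mk_edge u v \in tour_edges s -> (u \in s) && (v \in s).
Proof.
case/mapP=> [[a b] ab_s] uv_ab.
have eq_size : size s = size (rot 1 s) by rewrite size_rot.
have a_s : a \in s by rewrite -(unzip1_zip (eq_leq eq_size)) (map_f fst ab_s).
have b_s : b \in s.
  by rewrite -(mem_rot 1) -(unzip2_zip (eq_leq (esym eq_size))) (map_f snd ab_s).
have end_ab w : 0 < ends (mk_edge u v) w -> w \in s.
  by rewrite uv_ab ends_mk_edge /=; case: eqP => [<-|]; case: eqP => [<-|].
by rewrite !end_ab // ends_mk_edge eqxx ?addn1.
Qed.

Lemma deg_tour_edges s v : deg (mgraph (tour_edges s)) v = 2 * count_mem v s.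
Proof.
rewrite deg_mgraph big_map.
under eq_bigr do rewrite ends_mk_edge.
have rot_s : perm_eq (rot 1 s) s by rewrite perm_rot.
rewrite mul2n -addnn -{2}(permP rot_s (pred1 v)).
have: size s = size (rot 1 s) by rewrite size_rot.
elim: s (rot 1 s) {rot_s} => [|y s IH] [|y' t] //=.
  by rewrite big_nil.
by move=> [eq_size]; rewrite big_cons IH //=; lia.
Qed.

Lemma connect_tour_edges z s :
  {subset tour_edges s <= [pred e | 0 < z e]} ->
  {in s &, forall u v, connect (supp_adj z) u v}.
Proof.
case: s => [//|x p] z_tour u v u_s v_s.
have z_walk : {subset walk_edges x p <= [pred e | 0 < z e]}.
  by move=> e e_walk; apply: z_tour; rewrite tour_edges_cons mem_rcons inE e_walk orbT.
have /path_connect conn : path (supp_adj z) x p.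
  elim: p x {z_tour u_s v_s} z_walk => //= y p IH x z_walk.
  rewrite [supp_adj _ _ _]z_walk ?mem_head // IH // => e e_walk.
  by apply: z_walk; rewrite inE e_walk orbT.
apply: (connect_trans (y := x)); last exact: conn.
by rewrite (sym_connect_sym (@supp_adj_sym _ z)); exact: conn.
Qed.

End Tours.

Section DegreeReduction.
Variables (R : realFieldType) (n : nat) (c : edge n -> R).
Hypothesis c_ge0 : forall e, (0 <= c e)%R.
Hypothesis c_triangle :
  forall u v w : 'I_n, (c (mk_edge u v) <= c (mk_edge u w) + c (mk_edge w v))%R.
Implicit Types (v x : 'I_n) (z : edge n -> nat).

Lemma reduce_deg_at z v : 2 <= deg z v ->
  exists z', [/\ deg z' v + 2 = deg z v, forall x, x != v -> deg z' x = deg z x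
               & (cost c z' <= cost c z)%R].
Proof.
move=> deg_v; case: (posnP (z (mk_edge v v))) => [no_loop | loop].
  have [u zu] := deg_gt0_edge (ltnW deg_v).
  have uv : u != v by apply: contraTneq zu => ->; rewrite no_loop.
  set z1 := sub1 z (mk_edge v u).
  have deg1 x : deg z1 x + ((v == x) + (u == x)) = deg z x.
    by rewrite -ends_mk_edge deg_sub1.
  have [|w zw] := @deg_gt0_edge _ z1 v; first by have := deg1 v; rewrite eqxx; lia.
  have wv : w != v by apply: contraTneq zw => ->; rewrite /z1 /sub1 no_loop.
  have deg2 x : deg (sub1 z1 (mk_edge v w)) x + ((v == x) + (w == x)) = deg z1 x.
    by rewrite -ends_mk_edge deg_sub1.
  exists (msum (sub1 z1 (mk_edge v w)) (mgraph [:: mk_edge u w])); split.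
  - rewrite deg_msum deg_mgraph big_seq1 ends_mk_edge.
    by have := deg1 v; have := deg2 v; rewrite eqxx !(negbTE uv, negbTE wv) /=; lia.
  - move=> x xv; rewrite deg_msum deg_mgraph big_seq1 ends_mk_edge.
    by have := deg1 x; have := deg2 x; rewrite eq_sym (negbTE xv); lia.
  rewrite cost_msum cost_mgraph big_seq1 -(cost_sub1 c zu) -(cost_sub1 c zw).
  by have := c_triangle u w v; rewrite (mk_edgeC u v); lra.
exists (sub1 z (mk_edge v v)); split.
- by have := deg_sub1 v loop; rewrite ends_mk_edge eqxx /=; lia.
- by move=> x xv; have := deg_sub1 x loop; rewrite ends_mk_edge eq_sym (negbTE xv) /=; lia.
by rewrite -(cost_sub1 c loop) lerDl c_ge0.
Qed.

Lemma degree_reduction z (q : 'I_n -> nat) : (forall v, 2 * q v <= deg z v) ->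
  exists z', (forall v, deg z' v = deg z v - 2 * q v) /\ (cost c z' <= cost c z)%R.
Proof.
have [k] := ubnP (\sum_v q v); elim: k q z => // k IH q z size_q q_deg.
case: (pickP (fun v => 0 < q v)) => [v qv | q0]; last first.
  exists z; split => // v; move: (q0 v) => /negbT.
  by rewrite -leqNgt leqn0 => /eqP->; rewrite muln0 subn0.
have [z1 [deg1_v deg1 cost1]] : exists z1, [/\ deg z1 v + 2 = deg z v,
    forall x, x != v -> deg z1 x = deg z x & (cost c z1 <= cost c z)%R].
  by apply: reduce_deg_at; apply: leq_trans (q_deg v); lia.
pose q1 x := q x - (x == v).
have q1E x : x != v -> q1 x = q x by rewrite /q1 => /negbTE->; rewrite subn0.
have [||z2 [deg2 cost2]] := IH q1 z1.
- suff sum_q : \sum_x q x = (\sum_x q1 x).+1 by rewrite -ltnS -sum_q.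
  rewrite (bigD1 v) //= [in RHS](bigD1 v) //= -addSn.
  by congr (_ + _); [rewrite /q1 eqxx /=; lia | apply: eq_bigr => x /q1E].
- move=> x; case: (eqVneq x v) => [->|xv]; last by rewrite deg1 // q1E.
  by have := q_deg v; rewrite /q1 eqxx /=; lia.
exists z2; split; last exact: le_trans cost2 cost1.
move=> x; rewrite deg2; case: (eqVneq x v) => [->|xv]; last by rewrite deg1 // q1E.
by have := q_deg v; rewrite /q1 eqxx /=; lia.
Qed.

End DegreeReduction.

Section EulerianMultigraphs.
Variable n : nat.
Implicit Types (a b v w : 'I_n) (z : edge n -> nat) (s t : seq 'I_n).

Lemma walk_decomposition z a b :
  (forall w, odd (deg z w) = (a == w) (+) (b == w)) ->
  exists p z', [/\ last a p = b, z =1 msum (mgraph (walk_edges a p)) z'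
                 & forall w, ~~ odd (deg z' w)].
Proof.
have [k] := ubnP (msize z); elim: k z a => // k IH z a size_z z_odd.
case: (eqVneq a b) z_odd => [<- | ab] z_odd.
  by exists [::], z; split=> // w; rewrite z_odd addbb.
have [y zy] : exists y, 0 < z (mk_edge a y).
  by apply: deg_gt0_edge; apply: odd_gt0; rewrite z_odd eqxx eq_sym (negbTE ab).
have [|w|p [z' [last_p z1E z'_even]]] := IH (sub1 z (mk_edge a y)) y.
- by rewrite -ltnS (msize_sub1 zy).
- move: (congr1 odd (deg_sub1 w zy)); rewrite oddD z_odd ends_mk_edge oddD !oddb.
  by case: odd; case: (a == w); case: (y == w); case: (b == w).
exists (y :: p), z'; split => // f.
rewrite -(msum_sub1 zy f) /msum z1E /msum /mgraph /= -/(walk_edges y p); lia.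
Qed.

Lemma closed_walk_decomposition z : (forall v, ~~ odd (deg z v)) ->
  exists ws : seq (seq 'I_n), z =1 mgraph (flatten [seq tour_edges s | s <- ws]).
Proof.
have [k] := ubnP (msize z); elim: k z => // k IH z size_z z_even.
case: (pickP (fun e => 0 < z e)) => [e | z0]; last first.
  by exists [::] => e; move: (z0 e) => /negbT; rewrite -leqNgt leqn0 => /eqP.
rewrite -(mk_edge_ends e); set a := (val e).1; set b := (val e).2 => /= zab.
have [|p [z' [last_p z1E z'_even]]] := @walk_decomposition (sub1 z (mk_edge a b)) b a.
  move=> w; move: (congr1 odd (deg_sub1 w zab)).
  rewrite oddD ends_mk_edge oddD !oddb (negbTE (z_even w)).
  by case: odd; case: (a == w); case: (b == w).
have [|ws ws_z'] := IH z' _ z'_even.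
  have : msize z' <= msize (sub1 z (mk_edge a b)).
    by apply: leq_sum => f _; rewrite z1E leq_addl.
  by have := msize_sub1 zab; lia.
exists ((b :: p) :: ws) => f.
rewrite -(msum_sub1 zab f) /msum z1E /msum /mgraph /= count_cat ws_z' /mgraph.
by rewrite tour_edges_cons last_p -cats1 count_cat /=; lia.
Qed.

Lemma merge_tours x s t : x \in s -> x \in t ->
  exists m, perm_eq (tour_edges m) (tour_edges s ++ tour_edges t).
Proof.
move=> /rot_index s_x /rot_index t_x.
exists (x :: drop (index x s).+1 s ++ take (index x s) s ++
        x :: drop (index x t).+1 t ++ take (index x t) t).
rewrite catA tour_edges_cat -s_x -t_x.
by apply: perm_cat; apply: perm_tour_edges_rot.
Qed.

Lemma eulerian_tour z (ws : seq (seq 'I_n)) : connected_supp z ->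
  z =1 mgraph (flatten [seq tour_edges s | s <- ws]) ->
  exists s, z =1 mgraph (tour_edges s).
Proof.
move=> z_conn; have [k] := ubnP (size ws).
elim: k ws => // k IH [|w1 rest] /= size_ws z_ws.
  by exists [::].
case: w1 z_ws => [|u w1'] z_ws; first exact: (IH rest).
set w1 := u :: w1' in z_ws *.
case: (boolP (has (fun t => has (mem t) w1) rest)) => [|no_meet].
  case/hasP=> t t_rest /hasP[x x_w1 x_t].
  have [m m_perm] := merge_tours x_w1 x_t.
  apply: (IH (m :: rem t rest)); first by have /= := perm_size (perm_to_rem t_rest); lia.
  move=> f; rewrite z_ws /mgraph /= !count_cat (permP m_perm) count_cat -addnA.
  have := perm_flatten (perm_map (@tour_edges n) (perm_to_rem t_rest)).
  by move/permP=> ->; rewrite /= count_cat.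
have w1_closed : closed (supp_adj z) (mem w1).
  apply: intro_closed => [|x y]; first exact: sym_connect_sym (@supp_adj_sym _ z).
  rewrite /supp_adj z_ws mgraph_gt0 mem_cat => /orP[/mem_tour_edges/andP[] //|].
  case/flatten_mapP=> t t_rest /mem_tour_edges/andP[x_t _] x_w1.
  by case/negP: (hasPn no_meet t t_rest); apply/hasP; exists x.
have rest_nil : {in rest, forall t, t = [::]}.
  move=> [//|y t] t_rest; case/negP: (hasPn no_meet _ t_rest); apply/hasP.
  exists y; last exact: mem_head.
  by have := closed_connect w1_closed (z_conn u y); rewrite !inE eqxx => <-.
exists w1 => f; rewrite z_ws /mgraph count_cat.
suff /count_memPn-> : f \notin flatten [seq tour_edges s | s <- rest] by rewrite addn0.
by apply/negP=> /flatten_mapP[t /rest_nil->].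
Qed.

End EulerianMultigraphs.

Section Shortcutting.
Variables (R : realFieldType) (n : nat) (c : edge n -> R).
Hypothesis c_triangle :
  forall u v w : 'I_n, (c (mk_edge u v) <= c (mk_edge u w) + c (mk_edge w v))%R.
Implicit Types (x : 'I_n) (s t : seq 'I_n).

Lemma tour_cost_drop x t : x \in t ->
  (\sum_(e <- tour_edges t) c e <= \sum_(e <- tour_edges (x :: t)) c e)%R.
Proof.
case: t => [//|y t] _; rewrite !tour_edges_cons walk_edges_cons rcons_cons big_cons.
rewrite -!cats1 !big_cat !big_seq1 [last x _]/= /=.
by have := c_triangle (last y t) y x; lra.
Qed.

Lemma tour_shortcut s : exists s', [/\ uniq s', s' =i s
  & (\sum_(e <- tour_edges s') c e <= \sum_(e <- tour_edges s) c e)%R].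
Proof.
have [k] := ubnP (size s); elim: k s => // k IH s size_s.
case: (boolP (uniq s)) => [s_uniq | s_dup]; first by exists s.
have [x x_dup] : exists x, 1 < count_mem x s.
  case: (pickP (fun x => 1 < count_mem x s)) => [x|no_dup]; first by exists x.
  case/negP: s_dup; apply: count_mem_uniq => x; rewrite -has_pred1 has_count.
  by move: (no_dup x) => /negbT; case: (count_mem x s) => [|[|]].
have x_s : x \in s by rewrite -has_pred1 has_count; lia.
have s_rot : rot (index x s) s = x :: (drop (index x s).+1 s ++ take (index x s) s).
  exact: rot_index.
set t := drop _ s ++ _ in s_rot.
have rot_s : perm_eq (rot (index x s) s) s by rewrite perm_rot.
have x_t : x \in t.
  by move: x_dup; rewrite -(permP rot_s) s_rot -has_pred1 has_count /= eqxx; lia.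
have [|s' [s'_uniq s'_t s'_cost]] := IH t.
  by have := congr1 size s_rot; rewrite size_rot /=; lia.
exists s'; split => // [y | ].
  by rewrite s'_t -[y \in s](mem_rot (index x s)) s_rot inE; case: eqP => // ->.
rewrite -(perm_big _ (perm_tour_edges_rot (index x s) s)) s_rot.
exact: le_trans s'_cost (tour_cost_drop x_t).
Qed.

Lemma eulerian_ham_cycle z : (forall v, ~~ odd (deg z v)) -> connected_supp z ->
  (forall v, 0 < deg z v) -> exists2 H, ham_cycle H & (cost c H <= cost c z)%R.
Proof.
move=> z_even z_conn z_pos.
have [ws z_ws] := closed_walk_decomposition z_even.
have [s z_s] := eulerian_tour z_conn z_ws.
have [s' [s'_uniq s'_s s'_cost]] := tour_shortcut s.
exists (mgraph (tour_edges s')); last by rewrite (eq_cost c z_s) !cost_mgraph.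
exists s'; split => //; apply: uniq_perm => // [|v]; first exact: enum_uniq.
rewrite mem_enum s'_s -has_pred1 has_count.
by have := z_pos v; rewrite (eq_deg z_s) deg_tour_edges muln_gt0 => /= ->.
Qed.

End Shortcutting.

Theorem theorem5 (R : realFieldType) (n : nat) (c : edge n -> R)
  (r : 'I_n -> nat) (alpha : R) (T1 P : edge n -> nat) :
  metric_cost c ->
  (forall v, 0 < r v)%N ->
  (1 <= alpha)%R ->
  ham_cycle T1 ->
  (forall H, ham_cycle H -> cost c T1 <= alpha * cost c H)%R ->
  transp_feasible (fun v => r v - 1)%N P ->
  (forall Q, transp_feasible (fun v => r v - 1)%N Q -> cost c P <= cost c Q)%R ->
  mvtsp_feasible r (msum T1 P) /\
  (forall z, mvtsp_feasible r z -> cost c (msum T1 P) <= (alpha + 1) * cost c z)%R.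
Proof.
move=> [c_ge0 c_triangle] r_gt0 alpha_ge1 [s [s_enum T1_s]] T1_opt P_feas P_opt.
have s_mem v : v \in s by rewrite (perm_mem s_enum) mem_enum.
have deg_T1 v : deg T1 v = 2.
  rewrite (eq_deg T1_s) deg_tour_edges (permP s_enum).
  by rewrite count_uniq_mem ?enum_uniq ?mem_enum.
split.
  split => [v | u v]; first by rewrite deg_msum deg_T1 P_feas; have := r_gt0 v; lia.
  apply: (connect_tour_edges (s := s)) => // e e_s.
  by rewrite inE /msum T1_s -/(mgraph _ e) ltn_addr ?mgraph_gt0.
move=> z [z_deg z_conn].
have [|Q [Q_deg Q_cost]] := degree_reduction c_ge0 c_triangle (q := fun=> 1) (z := z).
  by move=> v; rewrite z_deg; have := r_gt0 v; lia.
have P_z : (cost c P <= cost c z)%R.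
  by apply: le_trans (P_opt Q _) Q_cost => v; rewrite Q_deg z_deg; lia.
have [||H H_ham H_z] := eulerian_ham_cycle c_triangle (z := z) _ z_conn.
- by move=> v; rewrite z_deg oddM.
- by move=> v; rewrite z_deg muln_gt0 r_gt0.
have T1_z : (cost c T1 <= alpha * cost c z)%R.
  by apply: le_trans (T1_opt H H_ham) _; rewrite ler_wpM2l // (le_trans ler01).
by rewrite cost_msum mulrDl mul1r; lra.
Qed.
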